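(* Let $A_1,\dots,A_m$ be invertible real $n\times n$ matrices and $B_1,\dots,B_m$ real matrices with $n$ rows, not all zero. Let $V_0=\{0\}$, $V_1=\sum_{i=1}^m\mathrm{Im}(B_i)$ and $V_{k+1}=V_k+\sum_{i=1}^mA_iV_k$ for $k\ge1$. Let $\pi\in\Sigma^*$ and let $k\ge1$ be such that $\dim V_{k-1}\le\dim\mathcal{R}(\pi)<\dim V_k$. Then there exists a word $\pi_0$ of length at most $k$ such that $\dim\mathcal{R}(\pi_0\pi)>\dim\mathcal{R}(\pi)$.
   Context: $\Sigma=\{1,\dots,m\}$, $\Sigma^*$ is the set of finite words over $\Sigma$, $\pi_0\pi$ denotes concatenation. For $\pi=i_1\cdots i_k$, $\mathcal{R}(\pi)=\mathrm{Im}(A_{i_k}\cdots A_{i_2}B_{i_1},\dots,A_{i_k}B_{i_{k-1}},B_{i_k})$ is the reachable space from the origin at time $k$ of the switched system $x_k=A_{i_k}x_{k-1}+B_{i_k}u_k$ with switching sequence $\pi$ (and $\mathcal{R}$ of the empty word is $\{0\}$). $A_iV$ is the image of subspace $V$ under $A_i$. *)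

From HB Require Import structures.
From mathcomp Require Import all_boot all_order all_algebra.
From mathcomp Require Export reals.
Set Implicit Arguments. Unset Strict Implicit. Unset Printing Implicit Defensive.
Import GRing.Theory Num.Theory.
Local Open Scope ring_scope.

(* Convention: a subspace of R^n is represented, as in mxalgebra, by the row
   space of a matrix with n columns.  Hence the column space Im(M) of a matrix
   M with n rows is the row space of M^T, and the image A V of a subspace V
   (row space of a matrix V) under A is the row space of V *m A^T. *)

Section Defs.
Variables (R : fieldType) (n m : nat) (p : 'I_m -> nat).
Variables (A : 'I_m -> 'M[R]_n) (B : forall i : 'I_m, 'M[R]_(n, p i)).

(* Reachable space R(pi) for a word pi = i_1 ... i_k (a list [:: i_1; ...; i_k]):
   R([::]) = {0},  R(pi i) = A_i R(pi) + Im(B_i). *)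
Definition reach (pi : seq 'I_m) : 'M[R]_n :=
  foldl (fun V i => (V *m (A i)^T + (B i)^T)%MS) 0 pi.

Fixpoint Vsp (k : nat) : 'M[R]_n :=
  match k with
  | 0 => 0
  | 1 => (\sum_(i < m) <<(B i)^T>>)%MS
  | k'.+1 => (Vsp k' + \sum_(i < m) <<Vsp k' *m (A i)^T>>)%MS
  end.
End Defs.

From HB Require Import structures.
From mathcomp Require Import all_boot all_order all_algebra.
From mathcomp Require Import reals.
From Stdlib Require Import Classical.
Set Implicit Arguments. Unset Strict Implicit. Unset Printing Implicit Defensive.
Import GRing.Theory Num.Theory.
Local Open Scope ring_scope.

(* Prefixing a word pi0 to pi gives R(pi0 pi) = Phi_pi R(pi0) + R(pi), where
   Phi_pi = A_{i_k} ... A_{i_1} is the (invertible) transition matrix of pi.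
   If no prefix of length at most k enlarges R(pi), then R(pi) contains
   Phi_pi R(pi0) for every such pi0; since V_k is spanned by these R(pi0),
   R(pi) contains Phi_pi V_k, which has dimension dim V_k > dim R(pi).
   Only the upper bound dim R(pi) < dim V_k is needed. *)

Section Reachability.
Variables (R : fieldType) (n m : nat) (p : 'I_m -> nat).
Variables (A : 'I_m -> 'M[R]_n) (B : forall i : 'I_m, 'M[R]_(n, p i)).

Let step (V : 'M[R]_n) (i : 'I_m) := (V *m (A i)^T + (B i)^T)%MS.

(* [V *m transition_mx pi] is the image of V under A_{i_k} ... A_{i_1}. *)
Definition transition_mx (pi : seq 'I_m) : 'M[R]_n :=
  foldr (fun i M => (A i)^T *m M) 1%:M pi.

Lemma row_free_transition_mx (pi : seq 'I_m) :
  (forall i, A i \in unitmx) -> row_free (transition_mx pi).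
Proof.
move=> A_unit; elim: pi => [|i pi IHpi] /=; first by rewrite row_free_unit unitmx1.
by rewrite /row_free mxrankMfree // -/(row_free _) row_free_unit unitmx_tr.
Qed.

Lemma foldl_step_mono (pi : seq 'I_m) (V W : 'M[R]_n) :
  (V <= W)%MS -> (foldl step V pi <= foldl step W pi)%MS.
Proof.
elim: pi V W => [//|i pi IHpi] V W sVW /=.
by apply: IHpi; rewrite addsmxS ?submxMr.
Qed.

Lemma transition_sub_foldl_step (pi : seq 'I_m) (V : 'M[R]_n) :
  (V *m transition_mx pi <= foldl step V pi)%MS.
Proof.
elim: pi V => [|i pi IHpi] V /=; first by rewrite mulmx1.
apply: submx_trans (IHpi _).
by rewrite mulmxA submxMr // addsmxSl.
Qed.

Lemma reach_sub_reach_cat (pi0 pi : seq 'I_m) :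
  (reach A B pi <= reach A B (pi0 ++ pi))%MS.
Proof. by rewrite /reach foldl_cat foldl_step_mono ?sub0mx. Qed.

Lemma reach_transition_sub_reach_cat (pi0 pi : seq 'I_m) :
  (reach A B pi0 *m transition_mx pi <= reach A B (pi0 ++ pi))%MS.
Proof. by rewrite /reach foldl_cat transition_sub_foldl_step. Qed.

Lemma reach_transition_sub_reach (pi0 pi : seq 'I_m) :
  (\rank (reach A B (pi0 ++ pi)) <= \rank (reach A B pi))%N ->
  (reach A B pi0 *m transition_mx pi <= reach A B pi)%MS.
Proof.
move=> rank_le; have sub_cat := reach_sub_reach_cat pi0 pi.
have cat_sub : (reach A B (pi0 ++ pi) <= reach A B pi)%MS.
  by rewrite -(mxrank_leqif_sup sub_cat) eqn_leq mxrankS.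
exact: submx_trans (reach_transition_sub_reach_cat pi0 pi) cat_sub.
Qed.

(* The multiplier M is what makes the induction go through: the summand
   V_k A_i^T of V_(k+1) is handled by M := A_i^T *m M and the word pi0 i. *)
Lemma Vsp_mul_sub (k : nat) (M W : 'M[R]_n) :
  (forall pi0, (size pi0 <= k)%N -> (reach A B pi0 *m M <= W)%MS) ->
  (Vsp A B k *m M <= W)%MS.
Proof.
elim: k M W => [|k IHk] M W reach_sub; first by rewrite mul0mx sub0mx.
case: k IHk reach_sub => [|k] IHk reach_sub.
  rewrite /= sumsmxMr; apply/sumsmx_subP => i _.
  apply: submx_trans (reach_sub [:: i] isT); apply: submxMr.
  by rewrite genmxE addsmxSr.
rewrite [Vsp A B _]/= addsmxMr addsmx_sub; apply/andP; split.
  by apply: IHk => pi0 size_pi0; apply: reach_sub; apply: leqW.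
rewrite sumsmxMr; apply/sumsmx_subP => i _.
rewrite (eqmxMr _ (genmxE _)) -mulmxA; apply: IHk => pi0 size_pi0.
apply: submx_trans (reach_sub (rcons pi0 i) _); last by rewrite size_rcons.
by rewrite mulmxA submxMr // /reach -cats1 foldl_cat addsmxSl.
Qed.

End Reachability.

Theorem lemma4 (R : realType) (n m : nat) (p : 'I_m -> nat)
  (A : 'I_m -> 'M[R]_n) (B : forall i : 'I_m, 'M[R]_(n, p i)) :
  (forall i, A i \in unitmx) ->
  (exists i, B i != 0) ->
  forall (pi : seq 'I_m) (k : nat), (1 <= k)%N ->
  (\rank (Vsp A B k.-1) <= \rank (reach A B pi) < \rank (Vsp A B k))%N ->
  exists pi0 : seq 'I_m, (size pi0 <= k)%N /\
    (\rank (reach A B pi) < \rank (reach A B (pi0 ++ pi)))%N.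
Proof.
move=> A_unit _ pi k _ /andP[_ rank_lt].
apply: NNPP => no_prefix.
have reach_sub pi0 : (size pi0 <= k)%N ->
    (reach A B pi0 *m transition_mx A pi <= reach A B pi)%MS.
  move=> size_pi0; apply: reach_transition_sub_reach; rewrite leqNgt.
  by apply/negP => rank_gt; apply: no_prefix; exists pi0.
have := mxrankS (Vsp_mul_sub reach_sub).
by rewrite mxrankMfree ?row_free_transition_mx // leqNgt rank_lt.
Qed.
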